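(* Let $A\in\mathbb{C}^{m\times n}$ and $X\in\mathbb{C}^{n\times m}$. Then the following are equivalent: (1) $A^{\mathfrak{m}}$ exists and $X=A^{\mathfrak{m}}$; (2) $XAa=a$ for all $a\in\mathcal{R}(A^{\sim})$, and $Xb=0$ for all $b\in\mathcal{N}(A^{\sim})$; (3) $AX=P_{\mathcal{R}(A),\mathcal{N}(A^{\sim})}$, $XA=P_{\mathcal{R}(X),\mathcal{N}(A)}$, and $\mathcal{R}(X)\subseteq\mathcal{R}(A^{\sim})$.
   Context: For a positive integer $k$, the Minkowski metric matrix of order $k$ is $G_k=\mathrm{diag}(1,-I_{k-1})$ (with $G_1=(1)$). For $A\in\mathbb{C}^{m\times n}$, the Minkowski adjoint is $A^{\sim}=G_nA^*G_m$, where $A^*$ is the conjugate transpose. The Minkowski inverse of $A$, denoted $A^{\mathfrak{m}}$, is a matrix $X\in\mathbb{C}^{n\times m}$ with $AXA=A$, $XAX=X$, $(AX)^{\sim}=AX$, $(XA)^{\sim}=XA$ (unique if it exists). $\mathcal{R}(\cdot)$, $\mathcal{N}(\cdot)$ denote range and null space. For subspaces $\mathcal{S},\mathcal{T}$ of $\mathbb{C}^k$ with $\mathcal{S}\oplus\mathcal{T}=\mathbb{C}^k$, $P_{\mathcal{S},\mathcal{T}}$ denotes the projector onto $\mathcal{S}$ along $\mathcal{T}$ (statement (3) includes that the relevant direct sums hold). *)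

From HB Require Import structures.
From mathcomp Require Import all_boot all_order all_algebra.
From mathcomp Require Import complex.
From mathcomp Require Import reals.
Set Implicit Arguments. Unset Strict Implicit. Unset Printing Implicit Defensive.
Import Order.TTheory GRing.Theory Num.Theory.
Local Open Scope ring_scope.

Definition minkG {F : pzRingType} (k : nat) : 'M[F]_k :=
  diag_mx (\row_(i < k) (if (i : nat) == 0%N then 1 else -1)).

Definition conjT {C : numClosedFieldType} {m n : nat} (A : 'M[C]_(m, n)) : 'M[C]_(n, m) :=
  (map_mx Num.conj A)^T.

Definition madj {C : numClosedFieldType} {m n : nat} (A : 'M[C]_(m, n)) : 'M[C]_(n, m) :=
  minkG n *m conjT A *m minkG m.

Definition is_minv {C : numClosedFieldType} {m n : nat}
  (A : 'M[C]_(m, n)) (X : 'M[C]_(n, m)) : Prop :=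
  [/\ A *m X *m A = A, X *m A *m X = X,
      madj (A *m X) = A *m X & madj (X *m A) = X *m A].

Definition inRange {C : pzRingType} {m n : nat} (A : 'M[C]_(m, n)) (v : 'cV[C]_m) : Prop :=
  exists y : 'cV[C]_n, v = A *m y.
Definition inNull {C : pzRingType} {m n : nat} (A : 'M[C]_(m, n)) (v : 'cV[C]_n) : Prop :=
  A *m v = 0.

Definition dirsum {C : pzRingType} {k : nat} (S T : 'cV[C]_k -> Prop) : Prop :=
  (forall x : 'cV[C]_k, exists s t, [/\ S s, T t & x = s + t]) /\
  (forall x : 'cV[C]_k, S x -> T x -> x = 0).

Definition is_proj {C : pzRingType} {k : nat} (P : 'M[C]_k) (S T : 'cV[C]_k -> Prop) : Prop :=
  [/\ dirsum S T,
      (forall x, S x -> P *m x = x) &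
      (forall x, T x -> P *m x = 0)].

(* Apart from one rank comparison, the argument only uses that the Minkowski
   adjoint A~ is an involutive anti-automorphism of matrix multiplication, so
   it is carried out for an arbitrary such adjoint.  What fails for an
   indefinite metric is the cancellation "A~ A M = 0 implies A M = 0"; it is
   recovered from the hypotheses themselves: once A X A = A and X = Z A~ (that
   is, N(A~) is contained in N(X)), A M = A Z A~ A M.  In condition (2), the
   identity X A A~ = A~ and its adjoint make X A symmetric and give A X A = A;
   the cancellation then gives A~ A X = A~, whence X A X = X and the symmetry
   of A X.  In condition (3) the only non-formal step is the reverse inclusion
   R(A~) in R(X), which follows by comparing ranks:
   rank A~ <= rank A = rank (A X A) <= rank X. *)

From HB Require Import structures.
From mathcomp Require Import all_boot all_order all_algebra.
From mathcomp Require Import complex.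
From mathcomp Require Import reals.
Import Order.TTheory GRing.Theory Num.Theory.
Local Open Scope ring_scope.
Set Implicit Arguments. Unset Strict Implicit. Unset Printing Implicit Defensive.

Section RingMatrices.
Variable R : pzRingType.

Lemma mulmx_cV_ext m n (M N : 'M[R]_(m, n)) :
  (forall v : 'cV[R]_n, M *m v = N *m v) -> M = N.
Proof.
move=> eqMN; apply/matrixP => i j.
have := congr1 (fun w : 'cV[R]_m => w i 0) (eqMN (delta_mx j 0)).
by rewrite -!colE !mxE.
Qed.

Lemma inRange_mulmx_id m n (A : 'M[R]_(m, n)) (X : 'M[R]_(n, m)) x :
  A *m X *m A = A -> inRange (A *m X) x <-> inRange A x.
Proof.
move=> AXA; split=> [[y ->]|[y ->]]; first by exists (X *m y); rewrite mulmxA.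
by exists (A *m y); rewrite mulmxA AXA.
Qed.

Lemma inNull_mulmx_id m n (A : 'M[R]_(m, n)) (X : 'M[R]_(n, m)) x :
  A *m X *m A = A -> inNull (X *m A) x <-> inNull A x.
Proof.
rewrite /inNull => AXA; split=> [XAx|Ax]; last by rewrite -mulmxA Ax mulmx0.
by rewrite -AXA -!mulmxA (mulmxA X) XAx mulmx0.
Qed.

Lemma idempotent_is_proj k (P : 'M[R]_k) (S T : 'cV[R]_k -> Prop) :
  P *m P = P -> (forall x, S x <-> inRange P x) ->
  (forall x, T x <-> inNull P x) -> is_proj P S T.
Proof.
move=> PP defS defT; split; first split.
- move=> x; exists (P *m x), (x - P *m x); split; last by rewrite addrC subrK.
    by apply/defS; exists x.
  by apply/defT; rewrite /inNull mulmxBr mulmxA PP subrr.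
- by move=> x /defS[y ->] /defT; rewrite /inNull mulmxA PP.
- by move=> x /defS[y ->]; rewrite mulmxA PP.
- by move=> x /defT.
Qed.

End RingMatrices.

Section FieldMatrices.
Context {F : fieldType}.

Lemma inNullS_submx p m n (B : 'M[F]_(p, m)) (X : 'M[F]_(n, m)) :
  (forall b, inNull B b -> inNull X b) -> (X <= B)%MS.
Proof.
move=> sNBX; rewrite submxE; apply/eqP/mulmx_cV_ext => v.
by rewrite mul0mx -mulmxA sNBX // /inNull mulmxA mulmx_coker mul0mx.
Qed.

Lemma inRangeS_submx m p q (B : 'M[F]_(m, p)) (X : 'M[F]_(m, q)) :
  (forall v, inRange X v -> inRange B v) <-> (X^T <= B^T)%MS.
Proof.
split=> [sRXB | /submxP[D defXt] _ [y ->]].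
  apply/row_subP => j; rewrite -tr_col colE.
  have [y ->] := sRXB _ (ex_intro _ (delta_mx j 0) erefl).
  by rewrite trmx_mul submxMl.
by exists (D^T *m y); rewrite -[X]trmxK defXt trmx_mul trmxK mulmxA.
Qed.

Lemma inRangeS_rank m p q (B : 'M[F]_(m, p)) (X : 'M[F]_(m, q)) :
  (forall v, inRange X v -> inRange B v) -> (\rank B <= \rank X)%N ->
  forall v, inRange B v -> inRange X v.
Proof.
rewrite !inRangeS_submx => sXB leBX.
by rewrite -(mxrank_leqif_sup sXB).2 eqn_leq mxrankS // !mxrank_tr.
Qed.

Context {adj : forall m n, 'M[F]_(m, n) -> 'M[F]_(n, m)}.
Arguments adj {m n}.
Hypothesis adjM : forall m n p (A : 'M[F]_(m, n)) (B : 'M[F]_(n, p)),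
  adj (A *m B) = adj B *m adj A.
Hypothesis adjK : forall m n (A : 'M[F]_(m, n)), adj (adj A) = A.
Hypothesis adj0 : forall m n, adj (0 : 'M[F]_(m, n)) = 0.
Hypothesis rank_adj :
  forall m n (A : 'M[F]_(m, n)), (\rank (adj A) <= \rank A)%N.

Definition is_adj_inv m n (A : 'M[F]_(m, n)) (X : 'M[F]_(n, m)) :=
  [/\ A *m X *m A = A, X *m A *m X = X, adj (A *m X) = A *m X &
      adj (X *m A) = X *m A].

Lemma is_adj_inv_of_fix m n (A : 'M[F]_(m, n)) (X : 'M[F]_(n, m)) :
  X *m A *m adj A = adj A -> (X <= adj A)%MS -> is_adj_inv A X.
Proof.
move=> XAA' /submxP[Z defX].
have AA'X' : A *m adj A *m adj X = A.
  by have := congr1 adj XAA'; rewrite !adjM adjK mulmxA.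
have symXA : adj (X *m A) = X *m A by rewrite adjM -{2}AA'X' !mulmxA XAA'.
have AXA : A *m X *m A = A by rewrite -mulmxA -symXA adjM mulmxA AA'X'.
have cancelAl p (M : 'M[F]_(n, p)) : adj A *m A *m M = 0 -> A *m M = 0.
  by move=> A'AM; rewrite -AXA defX -!mulmxA (mulmxA (adj A)) A'AM !mulmx0.
have cancelA'r p (N : 'M[F]_(p, n)) :
    N *m adj A *m A = 0 -> N *m adj A = 0.
  move=> /(congr1 adj); rewrite adj0 !adjM adjK mulmxA => /cancelAl.
  by move=> /(congr1 adj); rewrite adj0 adjM adjK.
have A'AX : adj A *m A *m X = adj A.
  have defN : (adj A *m A *m Z - 1%:M) *m adj A = adj A *m A *m X - adj A.
    by rewrite mulmxBl mul1mx defX !mulmxA.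
  apply/eqP; rewrite -subr_eq0 -defN cancelA'r // defN.
  by rewrite mulmxBl -!mulmxA (mulmxA A X) AXA subrr.
have X'A'A : adj X *m adj A *m A = A.
  by have := congr1 adj A'AX; rewrite !adjM adjK mulmxA.
split=> //.
- by rewrite {1}defX -!mulmxA (mulmxA (adj A)) A'AX -defX.
- by rewrite adjM -{1}A'AX !mulmxA X'A'A.
Qed.

Section Conditions.
Variables (m n : nat) (A : 'M[F]_(m, n)) (X : 'M[F]_(n, m)).

Lemma is_adj_inv_range_nullP : is_adj_inv A X <->
  (forall a, inRange (adj A) a -> X *m A *m a = a) /\
  (forall b, inNull (adj A) b -> X *m b = 0).
Proof.
split=> [[AXA XAX symAX symXA] | [fixXA sNX]].
  split=> [a [y ->] | b A'b]; first by rewrite mulmxA -symXA -adjM mulmxA AXA.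
  by rewrite -XAX -!mulmxA (mulmxA A X) -symAX adjM -mulmxA A'b !mulmx0.
apply: is_adj_inv_of_fix; last exact: inNullS_submx.
by apply: mulmx_cV_ext => v; rewrite -(mulmxA (X *m A)) fixXA //; exists v.
Qed.

Lemma is_adj_inv_proj : is_adj_inv A X ->
  [/\ is_proj (A *m X) (inRange A) (inNull (adj A)),
      is_proj (X *m A) (inRange X) (inNull A) &
      (forall v, inRange X v -> inRange (adj A) v)].
Proof.
case=> AXA XAX symAX symXA.
have A'AX : adj A *m A *m X = adj A by rewrite -mulmxA -symAX -adjM AXA.
split.
- apply: idempotent_is_proj => [|x|x]; first by rewrite mulmxA AXA.
    by rewrite inRange_mulmx_id.
  rewrite /inNull; split=> [A'x | AXx].
    by rewrite -symAX adjM -mulmxA A'x mulmx0.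
  by rewrite -A'AX -!mulmxA (mulmxA A X) AXx mulmx0.
- apply: idempotent_is_proj => [|x|x]; first by rewrite mulmxA XAX.
    by rewrite inRange_mulmx_id.
  by rewrite inNull_mulmx_id.
- move=> _ [y ->]; exists (adj X *m X *m y).
  by rewrite -{1}XAX -symXA adjM !mulmxA.
Qed.

Lemma proj_range_null :
  [/\ is_proj (A *m X) (inRange A) (inNull (adj A)),
      is_proj (X *m A) (inRange X) (inNull A) &
      (forall v, inRange X v -> inRange (adj A) v)] ->
  (forall a, inRange (adj A) a -> X *m A *m a = a) /\
  (forall b, inNull (adj A) b -> X *m b = 0).
Proof.
case=> [[_ fixAX nullAX] [_ fixXA _] sRXA'].
have AXA : A *m X *m A = A.
  by apply: mulmx_cV_ext => v; rewrite -(mulmxA (A *m X)) fixAX //; exists v.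
have leA'X : (\rank (adj A) <= \rank X)%N.
  apply: leq_trans (rank_adj A) _; rewrite -{1}AXA.
  exact: leq_trans (mxrankM_maxl _ _) (mxrankM_maxr _ _).
split=> [a /(inRangeS_rank sRXA' leA'X) RXa | b A'b]; first exact: fixXA.
rewrite -[X *m b]fixXA; last by exists b.
by rewrite -!mulmxA (mulmxA A X) nullAX // mulmx0.
Qed.

Lemma is_adj_inv_projP : is_adj_inv A X <->
  [/\ is_proj (A *m X) (inRange A) (inNull (adj A)),
      is_proj (X *m A) (inRange X) (inNull A) &
      (forall v, inRange X v -> inRange (adj A) v)].
Proof.
split; first exact: is_adj_inv_proj.
by move=> /proj_range_null; apply: (proj2 is_adj_inv_range_nullP).
Qed.

End Conditions.
End FieldMatrices.

Section MinkowskiAdjoint.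
Variable C : numClosedFieldType.

Lemma minkG_sqr k : minkG k *m minkG k = 1%:M :> 'M[C]_k.
Proof.
apply/matrixP => i j; rewrite /minkG mul_diag_mx !mxE.
case: (i == j); rewrite ?mulr0n ?mulr0 ?mulr1n //.
by case: ifP; rewrite ?mulr1 ?mulrNN ?mulr1.
Qed.

Lemma conjT_minkG k : conjT (minkG k) = minkG k :> 'M[C]_k.
Proof.
apply/matrixP => i j; rewrite /conjT /minkG !mxE.
have [->|_] := eqVneq i j; last by rewrite !mulr0n rmorph0.
by rewrite !mulr1n; case: ifP => _; rewrite ?rmorph1 ?rmorphN1.
Qed.

Lemma conjTM m n p (A : 'M[C]_(m, n)) (B : 'M[C]_(n, p)) :
  conjT (A *m B) = conjT B *m conjT A.
Proof. by rewrite /conjT map_mxM trmx_mul. Qed.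

Lemma conjTK m n (A : 'M[C]_(m, n)) : conjT (conjT A) = A.
Proof. by apply/matrixP => i j; rewrite /conjT !mxE conjCK. Qed.

Lemma madjM m n p (A : 'M[C]_(m, n)) (B : 'M[C]_(n, p)) :
  madj (A *m B) = madj B *m madj A.
Proof.
rewrite /madj conjTM !mulmxA -[_ *m minkG n *m minkG n]mulmxA.
by rewrite minkG_sqr mulmx1.
Qed.

Lemma madjK m n (A : 'M[C]_(m, n)) : madj (madj A) = A.
Proof.
rewrite /madj !conjTM conjTK !conjT_minkG !mulmxA minkG_sqr mul1mx.
by rewrite -mulmxA minkG_sqr mulmx1.
Qed.

Lemma madj0 m n : madj (0 : 'M[C]_(m, n)) = 0.
Proof. by rewrite /madj /conjT map_mx0 trmx0 mulmx0 mul0mx. Qed.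

Lemma rank_madj m n (A : 'M[C]_(m, n)) : (\rank (madj A) <= \rank A)%N.
Proof.
rewrite /madj; apply: leq_trans (mxrankM_maxl _ _) _.
apply: leq_trans (mxrankM_maxr _ _) _.
by rewrite /conjT mxrank_tr mxrank_map.
Qed.

End MinkowskiAdjoint.

Unset Implicit Arguments.

Theorem theorem5p6 (R : realType) (m n : nat) (Hm : (0 < m)%N) (Hn : (0 < n)%N)
  (A : 'M[R[i]]_(m, n)) (X : 'M[R[i]]_(n, m)) :
  let P1 := is_minv A X in
  let P2 := (forall a : 'cV[R[i]]_n, inRange (madj A) a -> X *m A *m a = a) /\
            (forall b : 'cV[R[i]]_m, inNull (madj A) b -> X *m b = 0) in
  let P3 := [/\ is_proj (A *m X) (inRange A) (inNull (madj A)),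
               is_proj (X *m A) (inRange X) (inNull A) &
               (forall v, inRange X v -> inRange (madj A) v)] in
  (P1 <-> P2) /\ (P1 <-> P3).
Proof.
split.
- exact: (is_adj_inv_range_nullP (@madjM _) (@madjK _) (@madj0 _) A X).
- exact: (is_adj_inv_projP (@madjM _) (@madjK _) (@madj0 _) (@rank_madj _) A X).
Qed.
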